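(* Let $\mathcal{L}_q$ be any projective plane of order $q\geq 3$. Then for every sufficiently large integer $n$, $R(P^{(q+1)}_{n,q},\mathcal{L}_q)\geq \left\lfloor\frac{q+2}{q+1}(n-1)\right\rfloor$.
   Context: A projective plane $\mathcal{L}_q$ of order $q$ is a $(q+1)$-regular $(q+1)$-uniform hypergraph on $q^2+q+1$ vertices in which every pair of vertices lies in a unique edge. For $k$-uniform hypergraphs $G,H$, $R(G,H)$ is the least $N$ such that every red/blue colouring of the edges of $K^{(k)}_N$ contains a red copy of $G$ or a blue copy of $H$. The tight path $P^{(k)}_{n,k-1}$ ($n\ge k$) has vertices $v_1,\dots,v_n$ and edges $\{v_i,\dots,v_{i+k-1}\}$ for $i\in[n-k+1]$. *)

From mathcomp Require Import all_boot.
Set Implicit Arguments. Unset Strict Implicit. Unset Printing Implicit Defensive.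

Definition uniform (V : finType) (k : nat) (E : {set {set V}}) : Prop :=
  forall e, e \in E -> #|e| = k.

Definition projective_plane (q : nat) (V : finType) (E : {set {set V}}) : Prop :=
  [/\ #|V| = q ^ 2 + q + 1,
      uniform (q.+1) E,
      (forall v : V, #|[set e in E | v \in e]| = q.+1) &
      (forall u v : V, u != v -> #|[set e in E | (u \in e) && (v \in e)]| = 1)].

(* Tight path P^{(k)}_{n,k-1} on vertices 'I_n (v_1..v_n are 0,...,n-1):
   edges {i, ..., i+k-1} for 0 <= i <= n-k. *)
Definition tight_path_edges (n k : nat) : {set {set 'I_n}} :=
  [set [set j : 'I_n | (i <= j) && (j < i + k)] | i : 'I_n & i + k <= n].

(* A red/blue colouring of the edges of K_N^(k): c e = true means red.
   (c is given on all subsets of 'I_N; only its values on k-subsets matter.)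
   A red (blue) copy of a hypergraph (V, E) is an injective vertex map whose
   image of every edge is red (blue). *)
Definition has_copy (N : nat) (c : {set 'I_N} -> bool) (col : bool)
  (V : finType) (E : {set {set V}}) : Prop :=
  exists f : V -> 'I_N, injective f /\ forall e, e \in E -> c (f @: e) = col.

Definition ramsey_arrow (N : nat) (VG : finType) (G : {set {set VG}})
  (VH : finType) (H : {set {set VH}}) : Prop :=
  forall c : {set 'I_N} -> bool, has_copy c true G \/ has_copy c false H.

From mathcomp Require Import all_boot zify.
Set Implicit Arguments. Unset Strict Implicit. Unset Printing Implicit Defensive.

(* Fix B = {n-1, ..., N-1} and colour an edge blue exactly when it meets B in a
   single vertex.  No set of points meets every line of a projective plane exactly
   once (the line through two different such points would contain both), so there
   is no blue plane.  Along a red tight path with windows of k consecutive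
   vertices, consecutive windows differ by one vertex, so their number of
   B-vertices changes by at most one and, never being 1, is either always 0 or
   always at least 2.  In the first case the n path vertices avoid B, which has
   only n-1 complementary vertices; in the second case each of the n/k disjoint
   windows contains a vertex of B, so N >= n-1 + n/k. *)

Lemma card_imset_setI_preimset (aT rT : finType) (f : aT -> rT)
    (A : {set aT}) (B : {set rT}) :
  injective f -> #|f @: A :&: B| = #|A :&: f @^-1: B|.
Proof.
move=> f_inj; rewrite -(card_imset _ f_inj).
suff -> : f @: A :&: B = f @: (A :&: f @^-1: B) by [].
apply/setP => y; apply/setIP/imsetP => [[/imsetP [x xA ->] fxB] | [x]].
  by exists x; rewrite // !inE xA.
by rewrite !inE => /andP [xA fxB] ->; rewrite imset_f.
Qed.

Lemma leq_card_setI_cover (T : finType) (A B C S : {set T}) :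
  A \subset B :|: C -> #|A :&: S| <= #|B :&: S| + #|C|.
Proof.
move=> sub_ABC; apply: leq_trans (subset_leq_card (setSI S sub_ABC)) _.
rewrite setIUl; apply: leq_trans (leq_card_setU _ _) _.
by rewrite leq_add2l subset_leq_card ?subsetIl.
Qed.

Lemma card_ord_eq_le1 (n m : nat) : #|[set j : 'I_n | (j : nat) == m]| <= 1.
Proof.
apply/card_le1_eqP => i j; rewrite !inE => /eqP ei /eqP ej.
by apply/val_inj/eqP; rewrite /= ei ej.
Qed.

Lemma card_ord_lt (N m : nat) : #|[set x : 'I_N | x < m]| = minn m N.
Proof.
have widen_inj : injective (widen_ord (geq_minr m N)).
  by move=> i j /(congr1 val) /= /val_inj.
rewrite -[RHS]card_ord -(card_imset _ widen_inj).
suff -> : [set x : 'I_N | x < m] = widen_ord (geq_minr m N) @: 'I_(minn m N) by [].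
apply/setP => x; rewrite inE; apply/idP/imsetP => [x_lt_m | [y _ ->]].
  have x_lt_min : x < minn m N by have := ltn_ord x; lia.
  by exists (Ordinal x_lt_min); last exact: val_inj.
by move: (ltn_ord y) => /=; lia.
Qed.

Section TightPathWindows.

Variables (n k : nat).

Definition window (i : nat) : {set 'I_n} := [set j : 'I_n | i <= j < i + k].

Lemma window_tight_path_edge i :
  0 < k -> i + k <= n -> window i \in tight_path_edges n k.
Proof.
move=> k_gt0 le_ikn; have lt_in : i < n by lia.
by apply/imsetP; exists (Ordinal lt_in); rewrite ?inE.
Qed.

Variable S : {set 'I_n}.

Local Notation hits i := #|window i :&: S|.

Lemma hits_succ_le i : hits i.+1 <= hits i + 1.
Proof.
apply: (@leq_trans (hits i + #|[set j : 'I_n | (j : nat) == i + k]|)).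
  apply: leq_card_setI_cover; apply/subsetP => j; rewrite !inE => /andP [le_ij lt_jik].
  by case: eqP => [_ | ne]; rewrite ?orbT ?orbF //; lia.
by rewrite leq_add2l card_ord_eq_le1.
Qed.

Lemma hits_le_succ i : hits i <= hits i.+1 + 1.
Proof.
apply: (@leq_trans (hits i.+1 + #|[set j : 'I_n | (j : nat) == i]|)).
  apply: leq_card_setI_cover; apply/subsetP => j; rewrite !inE => /andP [le_ij lt_jik].
  by case: eqP => [_ | ne]; rewrite ?orbT ?orbF //; lia.
by rewrite leq_add2l card_ord_eq_le1.
Qed.

Hypothesis hits_neq1 : forall i, i + k <= n -> hits i != 1.

Lemma hits_eq0_const i : i + k <= n -> (hits i == 0) = (hits 0 == 0).
Proof.
elim: i => [// | i IHi] le_ikn.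
have le_ikn' : i + k <= n by lia.
rewrite -(IHi le_ikn').
have := hits_neq1 le_ikn; have := hits_neq1 le_ikn'.
have := hits_succ_le i; have := hits_le_succ i; lia.
Qed.

Lemma hits0_eq0 : 0 < k -> k <= n -> hits 0 = 0 -> S = set0.
Proof.
move=> k_gt0 le_kn hits0; apply/setP => j; rewrite inE; apply/negP => jS.
have le_jkn : minn j (n - k) + k <= n by lia.
have := hits_eq0_const le_jkn; rewrite hits0 eqxx cards_eq0 => /eqP/setP/(_ j).
by rewrite !inE jS andbT; have := ltn_ord j; lia.
Qed.

Lemma hits0_gt0 : 0 < k -> 0 < hits 0 -> n %/ k <= #|S|.
Proof.
move=> k_gt0 hits0.
have cover : {subset iota 0 (n %/ k) <= [seq j %/ k | j : 'I_n <- enum S]}.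
  move=> t; rewrite mem_iota add0n => lt_t.
  have le_tkn : t * k + k <= n by rewrite -mulSnr -leq_divRL.
  have : 0 < hits (t * k) by rewrite lt0n (hits_eq0_const le_tkn) -lt0n.
  case/card_gt0P => j; rewrite !inE => /andP [/andP [lo hi] jS].
  apply/mapP; exists j; rewrite ?mem_enum //.
  by apply/eqP; rewrite eqn_leq leq_divRL // andbC -ltnS ltn_divLR // mulSnr; lia.
rewrite cardE -(size_map (fun j : 'I_n => j %/ k)) -[n %/ k](size_iota 0).
exact: uniq_leq_size (iota_uniq _ _) cover.
Qed.

Lemma tight_path_hits_dichotomy : 0 < k -> k <= n -> S = set0 \/ n %/ k <= #|S|.
Proof.
move=> k_gt0 le_kn; case: (posnP (hits 0)) => hits0.
  by left; exact: hits0_eq0.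
by right; exact: hits0_gt0.
Qed.

End TightPathWindows.

Section ProjectivePlane.

Variables (q : nat) (V : finType) (L : {set {set V}}).
Hypothesis planeL : projective_plane q L.

Lemma plane_line_through2 u v :
  u != v -> exists2 e, e \in L & (u \in e) && (v \in e).
Proof.
case: planeL => _ _ _ pair uv.
have /card_gt0P [e] : 0 < #|[set e in L | (u \in e) && (v \in e)]| by rewrite pair.
by rewrite inE => /andP [eL uve]; exists e.
Qed.

Lemma plane_line_avoiding v s :
  0 < q -> v != s -> exists2 e, e \in L & (v \in e) && (s \notin e).
Proof.
case: planeL => _ _ deg pair q_gt0 vs.
have : 0 < #|[set e in L | v \in e] :\: [set e in L | s \in e]|.
  rewrite cardsD.
  have -> : [set e in L | v \in e] :&: [set e in L | s \in e]
            = [set e in L | (v \in e) && (s \in e)].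
    by apply/setP => e; rewrite !inE; case: (e \in L).
  by rewrite deg pair //; lia.
case/card_gt0P => e; rewrite !inE => /andP [nse /andP [eL ve]].
by rewrite eL in nse; exists e; rewrite // ve.
Qed.

Lemma plane_no_unique_transversal (S : {set V}) :
  0 < q -> ~ (forall e, e \in L -> #|e :&: S| = 1).
Proof.
move=> q_gt0 once.
have point e : e \in L -> exists2 s, s \in e & s \in S.
  move/once/eqP/cards1P => [x ex]; have : x \in e :&: S by rewrite ex set11.
  by rewrite inE => /andP [xe xS]; exists x.
have unique e s t : e \in L -> s \in e -> t \in e -> s \in S -> t \in S -> s = t.
  move=> eL se te sS tS; have /card_le1_eqP : #|e :&: S| <= 1 by rewrite once.
  by apply; rewrite inE ?se ?te.
have /card_gt1P [u [w [_ _ uw]]] : 1 < #|V| by case: planeL => -> *; lia.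
have [e0 e0L _] := plane_line_through2 uw.
have [s se0 sS] := point e0 e0L.
have [v vs] : exists v, v != s.
  by case: (eqVneq u s) => [<- | us]; [exists w; rewrite eq_sym | exists u].
have [e1 e1L /andP [_ se1]] := plane_line_avoiding q_gt0 vs.
have [t te1 tS] := point e1 e1L.
have st : s != t by apply: contraNneq se1 => ->.
have [e2 e2L /andP [se2 te2]] := plane_line_through2 st.
by move/eqP: st; apply; apply: unique se2 te2 sS tS.
Qed.

End ProjectivePlane.

Definition single_hit_colouring (N : nat) (B : {set 'I_N}) (s : {set 'I_N}) : bool :=
  #|s :&: B| != 1.

Lemma single_hit_no_blue_plane q (V : finType) (L : {set {set V}}) N (B : {set 'I_N}) :
  0 < q -> projective_plane q L -> ~ has_copy (single_hit_colouring B) false L.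
Proof.
move=> q_gt0 planeL [f [f_inj blue]].
apply: (plane_no_unique_transversal planeL (S := f @^-1: B) q_gt0) => e eL.
by apply/eqP; rewrite -card_imset_setI_preimset //; apply/negbFE/blue.
Qed.

Lemma single_hit_red_tight_path n k N (B : {set 'I_N}) : 0 < k -> k <= n ->
  has_copy (single_hit_colouring B) true (tight_path_edges n k) ->
  n <= #|~: B| \/ n %/ k <= #|B|.
Proof.
move=> k_gt0 le_kn [f [f_inj red]].
have hits_neq1 i : i + k <= n -> #|window n k i :&: f @^-1: B| != 1.
  move=> le_ikn; rewrite -card_imset_setI_preimset //.
  exact/red/window_tight_path_edge.
case: (tight_path_hits_dichotomy hits_neq1 k_gt0 le_kn) => [S0 | le_S]; [left | right].
  have : f @: [set: 'I_n] \subset ~: B.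
    apply/subsetP => _ /imsetP [j _ ->]; rewrite inE; apply/negP => fjB.
    by have /setP/(_ j) := S0; rewrite !inE fjB.
  by move/subset_leq_card; rewrite card_imset // cardsT card_ord.
apply: leq_trans le_S _; rewrite -(card_imset _ f_inj).
by apply/subset_leq_card/subsetP => _ /imsetP [j jB ->]; rewrite inE in jB.
Qed.

Theorem corollary1p11 (q : nat) (V : finType) (L : {set {set V}}) :
  3 <= q -> projective_plane q L ->
  exists n0 : nat, forall n : nat, n0 <= n ->
    forall N : nat, ramsey_arrow N (tight_path_edges n q.+1) L ->
      ((q + 2) * (n - 1)) %/ (q + 1) <= N.
Proof.
move=> q_ge3 planeL; exists q.+1 => n le_qn N arrow.
pose B := [set x : 'I_N | n - 1 <= x].
have cardCB : #|~: B| = minn (n - 1) N.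
  by rewrite -card_ord_lt; apply: eq_card => x; rewrite !inE -ltnNge.
have cardB : #|B| = N - minn (n - 1) N by have := cardsC B; rewrite cardCB card_ord; lia.
case: (arrow (single_hit_colouring B)) => [red | blue]; last first.
  by case: (single_hit_no_blue_plane (ltn_trans _ q_ge3) planeL blue).
have div_gt0 : 0 < n %/ q.+1 by rewrite divn_gt0.
case: (single_hit_red_tight_path (ltn0Sn q) le_qn red); rewrite ?cardCB ?cardB; first lia.
move=> le_div; have -> : (q + 2) * (n - 1) = (n - 1) * (q + 1) + (n - 1) by lia.
rewrite divnMDl ?addn1 //; have := leq_div2r q.+1 (leq_subr 1 n); lia.
Qed.
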